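(* If $X$ is a proper geodesic metric space, then its Freudenthal compactification coincides with its coarse Freudenthal compactification $CF(X)$ (i.e. the identity of $X$ extends to a homeomorphism between them).
   Context: The Freudenthal compactification of $X$ is $X\cup\mathrm{Ends}(X)$, where a Freudenthal end is a decreasing sequence $\{U_i\}_{i\ge1}$ with $U_i$ a component of $X\setminus K_i$, for an exhaustion of $X$ by compact sets $K_i\subset\operatorname{int}(K_{i+1})$; the topology has as basis the open subsets of $X$ with compact closure and the sets consisting of a component $U$ of some $X\setminus K_i$ together with all ends containing $U$. A glacial scale on $X$ is a sequence $\mathcal S=\{(K_i,n_i)\}_{i\ge1}$, $K_i$ bounded subsets, $n_i$ natural numbers, such that for every bounded $K$ and $r>0$ there is $i$ with $K\subset K_i$, $n_i>r$; an $\mathcal S$-chain is a finite sequence $x_1,\dots,x_n$ with, for each $i\le n-1$, some $m$ such that $x_i,x_{i+1}\notin K_m$ and $d(x_i,x_{i+1})\le n_m$; $f:X\to\mathbb R$ is glacially oscillating if for every $\epsilon>0$ there is a glacial scale $\mathcal S$ with $|f(x_1)-f(x_n)|<\epsilon$ for all $\mathcal S$-chains. The coarse Freudenthal compactification $CF(X)$ of a proper metric space $X$ is the compactification induced by all continuous glacially oscillating functions $X\to[0,1]$. *)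

(* R : realType, topologies represented explicitly as
   families of open sets (set (set T)). *)
From mathcomp Require Import all_boot all_order all_algebra.
From mathcomp Require Import boolp classical_sets reals.
From Stdlib Require List.
Set Implicit Arguments. Unset Strict Implicit. Unset Printing Implicit Defensive.
Import Order.TTheory GRing.Theory Num.Theory.
Local Open Scope ring_scope.
Local Open Scope classical_set_scope.

Section MetricDefs.
Variables (R : realType) (X : Type) (d : X -> X -> R).

Definition is_metric : Prop :=
  (forall x y, 0 <= d x y) /\ (forall x y, d x y = 0 <-> x = y) /\
  (forall x y, d x y = d y x) /\ (forall x y z, d x z <= d x y + d y z).

Definition mopen (U : set X) : Prop :=
  forall x, U x -> exists r, 0 < r /\ (forall y, d x y < r -> U y).

Definition compact_for (T : Type) (opens : set (set T)) (A : set T) : Prop :=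
  forall (I : Type) (G : I -> set T), (forall i, opens (G i)) ->
    (forall x, A x -> exists i, G i x) ->
    exists s : seq I, forall x, A x -> exists i, List.In i s /\ G i x.

Definition mcompact (A : set X) : Prop := compact_for mopen A.

Definition mclosure (A : set X) : set X :=
  fun x => forall r, 0 < r -> exists y, A y /\ d x y < r.

Definition minterior (A : set X) : set X :=
  fun x => exists r, 0 < r /\ (forall y, d x y < r -> A y).

Definition bounded (A : set X) : Prop :=
  exists r : R, forall y z, A y -> A z -> d y z <= r.

Definition proper_metric : Prop :=
  forall (x : X) (r : R), mcompact (fun y => d x y <= r).

Definition geodesic : Prop :=
  forall x y, exists g : R -> X, g 0 = x /\ g (d x y) = y /\
    (forall s t, 0 <= s <= d x y -> 0 <= t <= d x y ->
       d (g s) (g t) = `|s - t|).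

Definition mconnected (A : set X) : Prop :=
  forall U V, mopen U -> mopen V ->
    (forall x, A x -> U x \/ V x) ->
    (forall x, ~ (A x /\ U x /\ V x)) ->
    (forall x, ~ (A x /\ U x)) \/ (forall x, ~ (A x /\ V x)).

Definition component (S C : set X) : Prop :=
  exists x, S x /\
    C = (fun y => exists A, mconnected A /\ (forall z, A z -> S z) /\ A x /\ A y).

Definition mcontinuous (f : X -> R) : Prop :=
  forall x eps, 0 < eps -> exists del, 0 < del /\
    (forall y, d x y < del -> `|f x - f y| < eps).

Definition glacial_scale (Ks : nat -> set X) (ns : nat -> nat) : Prop :=
  (forall i, bounded (Ks i)) /\
  (forall (B : set X) (r : R), bounded B -> 0 < r ->
     exists i, (forall x, B x -> Ks i x) /\ r < (ns i)%:R).

Definition scale_chain (Ks : nat -> set X) (ns : nat -> nat)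
    (x : nat -> X) (n : nat) : Prop :=
  forall i, (i < n)%N -> exists m,
    ~ Ks m (x i) /\ ~ Ks m (x i.+1) /\ d (x i) (x i.+1) <= (ns m)%:R.

Definition glacially_oscillating (f : X -> R) : Prop :=
  forall eps, 0 < eps -> exists Ks ns, glacial_scale Ks ns /\
    forall x n, scale_chain Ks ns x n -> `|f (x 0%N) - f (x n)| < eps.

Definition exhaustion (K : nat -> set X) : Prop :=
  (forall i, mcompact (K i)) /\
  (forall i x, K i x -> minterior (K i.+1) x) /\
  (forall x, exists i, K i x).

Definition is_end (K : nat -> set X) (U : nat -> set X) : Prop :=
  forall i, component (~` K i) (U i) /\ (forall x, U i.+1 x -> U i x).

Definition Ends (K : nat -> set X) := {U : nat -> set X | is_end K U}.

Definition FX (K : nat -> set X) := (X + Ends K)%type.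

Definition fbasis (K : nat -> set X) (B : set (FX K)) : Prop :=
  (exists V : set X, mopen V /\ mcompact (mclosure V) /\
     B = (fun p => match p with inl x => V x | inr _ => False end)) \/
  (exists (i : nat) (U : set X), component (~` K i) U /\
     B = (fun p => match p with
                   | inl x => U x
                   | inr e => proj1_sig e i = U end)).

Definition fopen (K : nat -> set X) (W : set (FX K)) : Prop :=
  forall p, W p -> exists B, @fbasis K B /\ B p /\ (forall q, B q -> W q).

Definition GO := {f : X -> R |
  mcontinuous f /\ (forall x, 0 <= f x <= 1) /\ glacially_oscillating f}.

(** closure of the image of the evaluation map X -> [0,1]^GO
    in the product topology *)
Definition in_cf_closure (phi : GO -> R) : Prop :=
  forall (s : seq GO) (eps : R), 0 < eps -> exists x : X,
    forall f, List.In f s -> `|proj1_sig f x - phi f| < eps.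

Definition CF := {phi : GO -> R | in_cf_closure phi}.

Lemma cf_emb_proof (x : X) : in_cf_closure (fun f => proj1_sig f x).
Proof. by move=> s eps He; exists x => f _; rewrite subrr normr0. Qed.

Definition cf_emb (x : X) : CF := exist _ (fun f => proj1_sig f x) (cf_emb_proof x).

(** product (pointwise) topology restricted to CF *)
Definition cfopen (W : set CF) : Prop :=
  forall phi, W phi -> exists (s : seq GO) (eps : R), 0 < eps /\
    forall psi : CF,
      (forall f, List.In f s -> `|proj1_sig psi f - proj1_sig phi f| < eps) ->
      W psi.

End MetricDefs.

Definition homeomorphism (A B : Type) (oA : set (set A)) (oB : set (set B))
    (h : A -> B) : Prop :=
  bijective h /\
  (forall W, oB W -> oA (fun a => W (h a))) /\
  (forall W, oA W -> oB (fun b => exists a, W a /\ h a = b)).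

From mathcomp Require Import all_boot all_order all_algebra.
From mathcomp Require Import boolp classical_sets reals.
From mathcomp Require Import lra.
From Stdlib Require List.
Set Implicit Arguments. Unset Strict Implicit. Unset Printing Implicit Defensive.
Import Order.TTheory GRing.Theory Num.Theory.
Local Open Scope ring_scope.
Local Open Scope classical_set_scope.

(* Points of one component of an open set are joined by chains of
   arbitrarily small steps inside it (cc_chain); far from K i such chains
   are chains of any given glacial scale, so a continuous glacially
   oscillating f : X -> [0,1] oscillates little on every component of
   X \ K i once i is large (GO_small_osc).  Hence f has a limit end_val e f
   along every end e, and the extension h of the identity sends an end e to
   f |-> end_val e f.  Two families of test functions are glacially
   oscillating (GO_of_far_steps): bumps clamp (r - d x .) and indicators of
   components of X \ K i damped near K i, continuous because X is geodesic
   (cc_far).  Bumps separate points and, by compactness of balls, capture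
   the points of CF(X) seeing a bump about x0; damped indicators separate
   ends and, for the remaining points of CF(X), select one component of
   X \ K i at every level, and these components form an end.  So h is
   bijective; continuity and openness follow by comparing basic open sets
   of FX with product neighbourhoods in CF(X). *)

Section FiniteFamilies.
Variable R : realType.

Lemma seq_pos_lb (I : Type) (s : seq I) (r : I -> R) :
  (forall i, 0 < r i) -> exists e, 0 < e /\ forall i, List.In i s -> e <= r i.
Proof.
move=> r0; elim: s => [|a s [e [e0 He]]]; first by exists 1.
exists (Num.min (r a) e); split; first by rewrite lt_min r0 e0.
by move=> i [<-|/He hi]; rewrite ge_min ?lexx ?hi ?orbT.
Qed.

Lemma seq_ub (s : seq R) : exists M, forall r, List.In r s -> r <= M.
Proof.
elim: s => [|a s [M HM]]; first by exists 0.
by exists (Num.max a M) => r [<-|/HM hr]; rewrite le_max ?lexx ?hr ?orbT.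
Qed.

Lemma seq_eventually (I : Type) (s : seq I) (P : I -> nat -> Prop) :
  (forall i, List.In i s -> exists n, forall m, (n <= m)%N -> P i m) ->
  exists n, forall i, List.In i s -> forall m, (n <= m)%N -> P i m.
Proof.
elim: s => [|a s IH] H; first by exists 0%N.
have [na Ha] := H a (or_introl erefl).
have [ns Hs] := IH (fun i hi => H i (or_intror hi)).
exists (maxn na ns) => i [<-|hi] m hm.
- by apply: Ha; apply: leq_trans hm; rewrite leq_maxl.
- by apply: Hs => //; apply: leq_trans hm; rewrite leq_maxr.
Qed.

Lemma In_map_seq (A B : Type) (F : A -> B) (s : seq A) a :
  List.In a s -> List.In (F a) (map F s).
Proof. by elim: s => [|b s IH] //= [->|h]; [left|right; apply: IH]. Qed.

Lemma pos_below2 (a b : R) : 0 < a -> 0 < b ->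
  exists del, 0 < del /\ del <= a /\ del <= b.
Proof. by move=> a0 b0; case: (lerP a b) => h; [exists a | exists b]; split => //; lra. Qed.

Lemma close_eq (a b : R) : (forall eps, 0 < eps -> `|a - b| <= eps) -> a = b.
Proof.
move=> H; apply/eqP; rewrite -subr_eq0 -normr_eq0; apply/eqP.
have := normr_ge0 (a - b); move: H; set t := `|a - b| => H t0.
case: (ltrP 0 t) => ht; last lra.
have := H (t / 2) ltac:(lra); lra.
Qed.

Lemma exists_nat_gt (r : R) : exists n : nat, r < n%:R.
Proof. by exists (Num.truncn r).+1; apply: truncnS_gt. Qed.

End FiniteFamilies.

Section Clamp.
Variable R : realType.

Definition clamp (t : R) : R := if t <= 0 then 0 else if t <= 1 then t else 1.

Lemma clamp_range t : 0 <= clamp t <= 1.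
Proof.
rewrite /clamp; case: (lerP t 0) => h1 /=; first by rewrite lexx ler01.
by case: (lerP t 1) => h2 /=; apply/andP; split; lra.
Qed.

Lemma clamp_lip a b : `|clamp a - clamp b| <= `|a - b|.
Proof.
have h1 := ler_norm (a - b).
have h2 : - (a - b) <= `|a - b| by rewrite -normrN; exact: ler_norm.
rewrite ler_norml /clamp.
case: (lerP a 0) => ha; case: (lerP b 0) => hb /=;
  try case: (lerP a 1) => ha1; try case: (lerP b 1) => hb1 /=;
  apply/andP; split; lra.
Qed.

Lemma clamp0 t : t <= 0 -> clamp t = 0.
Proof. by rewrite /clamp => ->. Qed.

Lemma clamp1 t : 1 <= t -> clamp t = 1.
Proof.
rewrite /clamp => h; case: (lerP t 0) => h0; first lra.
by case: (lerP t 1) => h1 //; apply/le_anti; rewrite h1 h.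
Qed.

Lemma clamp_pos t : 0 < clamp t -> 0 < t.
Proof. by rewrite /clamp; case: (lerP t 0) => h //; rewrite ltxx. Qed.

Lemma clamp_gt0 t : 0 < t -> 0 < clamp t.
Proof.
rewrite /clamp => h; case: (lerP t 0) => h0; first lra.
by case: (lerP t 1) => h1 //; rewrite ltr01.
Qed.

End Clamp.

Section ProperGeodesic.
Variables (R : realType) (X : Type) (d : X -> X -> R).
Hypothesis Hm : is_metric d.
Hypothesis Hp : proper_metric d.
Hypothesis Hg : geodesic d.

Lemma d_ge0 x y : 0 <= d x y. Proof. by case: Hm. Qed.
Lemma d_sym x y : d x y = d y x. Proof. by case: Hm => _ [_ []]. Qed.
Lemma d_tri x y z : d x z <= d x y + d y z. Proof. by case: Hm => _ [_ [_]]. Qed.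
Lemma d_xx x : d x x = 0. Proof. by case: Hm => _ [H _]; exact: (proj2 (H x x) erefl). Qed.
Lemma d_eq0 x y : d x y = 0 -> x = y.
Proof. by case: Hm => _ [H _]; exact: (proj1 (H x y)). Qed.

Lemma d_pos x y : x <> y -> 0 < d x y.
Proof. by move=> hxy; rewrite lt0r d_ge0 andbT; apply/eqP => /d_eq0. Qed.

Lemma d_lip c x y : `|d c x - d c y| <= d x y.
Proof.
rewrite ler_norml; have := d_tri c x y; have := d_tri c y x; rewrite (d_sym y x).
by move=> h1 h2; apply/andP; split; lra.
Qed.

Lemma lip_cont (f : X -> R) : (forall x y, `|f x - f y| <= d x y) -> mcontinuous d f.
Proof. by move=> Hf x eps eps0; exists eps; split => // y hy; have := Hf x y; lra. Qed.

Lemma mopen_ball x r : mopen d (fun y => d x y < r).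
Proof.
move=> y hy; exists (r - d x y); split; first lra.
by move=> z hz; have := d_tri x y z; lra.
Qed.

Lemma minterior_open A : mopen d (minterior d A).
Proof.
move=> x [r [r0 hr]]; exists r; split => // y hy.
exists (r - d x y); split; first lra.
by move=> z hz; apply: hr; have := d_tri x y z; lra.
Qed.

Lemma minterior_sub A x : minterior d A x -> A x.
Proof. by move=> [r [r0 hr]]; apply: hr; rewrite d_xx. Qed.

Lemma compact_bounded A c : mcompact d A -> exists rho, forall y, A y -> d c y <= rho.
Proof.
move=> HA; have [] := HA R (fun r y => d c y < r).
- by move=> r; exact: mopen_ball.
- by move=> y _; exists (d c y + 1); lra.
move=> s Hs; have [M HM] := seq_ub s.
by exists M => y /Hs [r [hr hy]]; have := HM r hr; lra.
Qed.

(* Compact sets are closed: cover A by the complements of closed balls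
   around a point outside A. *)
Lemma compact_compl_open A : mcompact d A -> mopen d (~` A).
Proof.
move=> HA x hx.
have [] := HA {r : R | 0 < r} (fun r y => sval r < d x y).
- move=> [r r0] y /= hy; exists (d x y - r); split; first lra.
  by move=> z hz; have := d_tri x z y; rewrite (d_sym z y); lra.
- move=> y hy; have hp : 0 < d x y / 2.
    by have := d_pos (fun exy => hx (eq_ind_r A hy exy)); lra.
  by exists (exist (fun r : R => 0 < r) _ hp) => /=; lra.
move=> s Hs; have [del [del0 Hdel]] := seq_pos_lb s (fun i => svalP i).
exists del; split => // y hy Ay; have [i [hi hiy]] := Hs y Ay.
by have := Hdel i hi; lra.
Qed.

Lemma closed_sub_compact A C : mcompact d A -> mopen d (~` C) ->
  (forall x, C x -> A x) -> mcompact d C.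
Proof.
move=> HA HC sCA I G HG Hcov.
have [] := HA (option I) (fun o => if o is Some i then G i else ~` C).
- by case.
- move=> x Ax; case: (pselect (C x)) => hc; last by exists None.
  by have [i hi] := Hcov x hc; exists (Some i).
move=> s Hs; exists (pmap id s) => x Cx.
have [[i|] [hi hx]] := Hs x (sCA x Cx); last by [].
exists i; split => //; elim: s hi {Hs} => [|a s IH] //= [->|h] /=; first by left.
by case: a => [a|] /=; [right|]; apply: IH.
Qed.

Lemma mclosure_open A : mopen d (~` mclosure d A).
Proof.
move=> x hx; have [r hr] : exists r, ~ (0 < r -> exists y, A y /\ d x y < r).
  by apply/existsNP => H; apply: hx => r; exact: H.
have r0 : 0 < r by apply: contra_notP hr => h1 h2.
have hn : forall y, A y -> ~ d x y < r by move=> y Ay hy; apply: hr => _; exists y.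
exists (r / 2); split; first lra.
move=> z hz Hz; have [y [Ay hy]] := Hz (r / 2) ltac:(lra).
by apply: (hn y Ay); have := d_tri x z y; lra.
Qed.

Lemma mclosure_ball x r y : mclosure d (fun z => d x z < r) y -> d x y <= r.
Proof.
move=> H; rewrite leNgt; apply/negP => hr.
have [z [hz hyz]] := H (d x y - r) ltac:(lra).
by have := d_tri x z y; rewrite (d_sym z y); lra.
Qed.

(* In a proper space open balls have compact closure, so they are basic
   open sets of FX. *)
Lemma ball_compact_closure x r : mcompact d (mclosure d (fun z => d x z < r)).
Proof.
apply: (@closed_sub_compact (fun y => d x y <= r)); [exact: Hp | exact: mclosure_open |].
by move=> y; apply: mclosure_ball.
Qed.

Definition cc (S : set X) (x : X) : set X :=
  fun y => exists A, mconnected d A /\ (forall z, A z -> S z) /\ A x /\ A y.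

Lemma mconnected1 x : mconnected d (fun z => z = x).
Proof.
move=> U V _ _ cov disj; case: (cov x erefl) => h.
- by right => z [-> hz]; apply: (disj x); split.
- by left => z [-> hz]; apply: (disj x); split.
Qed.

Lemma mconnectedU A B : mconnected d A -> mconnected d B ->
  (exists z, A z /\ B z) -> mconnected d (A `|` B).
Proof.
move=> cA cB [z [Az Bz]] U V oU oV cov disj.
have [hA|hA] := cA U V oU oV (fun x hx => cov x (or_introl hx))
  (fun x '(conj hx hu) => disj x (conj (or_introl hx) hu)).
all: have [hB|hB] := cB U V oU oV (fun x hx => cov x (or_intror hx))
  (fun x '(conj hx hu) => disj x (conj (or_intror hx) hu)).
- by left => x [[hx|hx] hu]; [apply: (hA x)|apply: (hB x)].
- by exfalso; case: (cov z (or_introl Az)) => h; [apply: (hA z)|apply: (hB z)]; split.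
- by exfalso; case: (cov z (or_introl Az)) => h; [apply: (hB z)|apply: (hA z)]; split.
- by right => x [[hx|hx] hu]; [apply: (hA x)|apply: (hB x)].
Qed.

Lemma cc_sub S x y : cc S x y -> S y.
Proof. by move=> [A [_ [hS [_ hy]]]]; apply: hS. Qed.

Lemma cc_mem S x y : cc S x y -> S x.
Proof. by move=> [A [_ [hS [hx _]]]]; apply: hS. Qed.

Lemma cc_refl S x : S x -> cc S x x.
Proof.
by move=> hx; exists (fun z => z = x); split; [apply: mconnected1 | split => // z ->].
Qed.

Lemma cc_sym S x y : cc S x y -> cc S y x.
Proof. by move=> [A [h1 [h2 [h3 h4]]]]; exists A. Qed.

Lemma cc_trans S x y z : cc S x y -> cc S y z -> cc S x z.
Proof.
move=> [A [cA [sA [Ax Ay]]]] [B [cB [sB [By Bz]]]].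
exists (A `|` B); split; first by apply: mconnectedU => //; exists y.
by split; [move=> w [/sA|/sB] | split; [left|right]].
Qed.

Lemma cc_eq S x y : cc S x y -> cc S x = cc S y.
Proof.
move=> hxy; apply: funext => z; apply: propext.
by split; [apply: cc_trans (cc_sym hxy) | apply: cc_trans hxy].
Qed.

Lemma cc_mono (S S' : set X) x y : (forall z, S z -> S' z) -> cc S x y -> cc S' x y.
Proof. by move=> hS [A [cA [sA hA]]]; exists A; split => //; split => // z /sA; exact: hS. Qed.

Lemma cc_component S x : S x -> component d S (cc S x).
Proof. by move=> hx; exists x. Qed.

Lemma component_at S C y : component d S C -> C y -> C = cc S y.
Proof. by move=> [x [hx ->]] hy; apply: cc_eq. Qed.

Lemma component_eq S C C' z : component d S C -> component d S C' ->
  C z -> C' z -> C = C'.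
Proof. by move=> h1 h2 z1 z2; rewrite (component_at h1 z1) (component_at h2 z2). Qed.

Lemma component_ne S C : component d S C -> exists x, C x.
Proof. by move=> [x [hx ->]]; exists x; apply: cc_refl. Qed.

Lemma component_sub S C y : component d S C -> C y -> S y.
Proof. by move=> [x [hx ->]]; apply: cc_sub. Qed.

(* A 1-Lipschitz path on [0, D] that starts in the part U of a separation
   (U, V) of its image stays in U: the supremum s of the times up to which
   it stays in U cannot be mapped into V, and if s < D the path would stay
   in U a little beyond s. *)
Lemma path_stays_in (g : R -> X) (D : R) (U V : set X) : 0 <= D ->
  (forall s t, 0 <= s <= D -> 0 <= t <= D -> d (g s) (g t) <= `|s - t|) ->
  mopen d U -> mopen d V ->
  (forall t, 0 <= t <= D -> U (g t) \/ V (g t)) ->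
  (forall t, 0 <= t <= D -> ~ (U (g t) /\ V (g t))) ->
  U (g 0) -> forall t, 0 <= t <= D -> U (g t).
Proof.
move=> D0 Hlip oU oV cov disj U0.
have close : forall a b r, 0 <= a <= D -> 0 <= b <= D -> `|a - b| < r -> d (g a) (g b) < r.
  by move=> a b r ha hb hab; apply: le_lt_trans (Hlip a b ha hb) hab.
pose S := [set t : R | 0 <= t <= D /\ forall u, 0 <= u <= t -> U (g u)].
have S0 : S 0.
  split; first by rewrite lexx D0.
  by move=> u /andP [h1 h2]; have -> : u = 0 by apply/le_anti/andP.
have ubS : ubound S D by move=> t [/andP [_ h] _].
have hsup : has_sup S by split; [exists 0 | exists D].
set s := sup S.
have s0 : 0 <= s by apply: ub_le_sup => //; exists D.
have sD : s <= D by apply: ge_sup => //; exists 0.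
have sD' : 0 <= s <= D by rewrite s0 sD.
have Us : U (g s).
  case: (cov s sD') => // Vs; have [r [r0 hr]] := oV _ Vs.
  have [t St ht] := sup_adherent r0 hsup; rewrite -/s in ht.
  move: (St) => [/andP [t0 tD] hU].
  have ts : t <= s by apply: ub_le_sup => //; exists D.
  have tD' : 0 <= t <= D by rewrite t0 tD.
  exfalso; apply: (disj t tD'); split; first by apply: hU; rewrite t0 lexx.
  by apply: hr; apply: close => //; rewrite ltr_distlC; apply/andP; split; lra.
have [r [r0 hr]] := oU _ Us.
have [t [/andP [t0 tD] hU] ht] := sup_adherent (ltac:(lra) : 0 < r / 2) hsup.
rewrite -/s in ht.
have beyond : forall u, 0 <= u -> u <= D -> u <= s + r / 2 -> U (g u).
  move=> u u0 uD us; case: (lerP u t) => hut; first by apply: hU; rewrite u0 hut.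
  apply: hr; apply: close => //; first by rewrite u0 uD.
  by rewrite ltr_distlC; apply/andP; split; lra.
case: (lerP D (s + r / 2)) => hD.
  by move=> u /andP [u0 uD]; apply: beyond => //; apply: le_trans uD hD.
have : S (s + r / 2).
  split; first by apply/andP; split; lra.
  by move=> u /andP [u0 us]; apply: beyond => //; lra.
by move=> /(ub_le_sup (ex_intro _ D ubS)); rewrite /s; lra.
Qed.

Lemma path_connected (g : R -> X) (D : R) : 0 <= D ->
  (forall s t, 0 <= s <= D -> 0 <= t <= D -> d (g s) (g t) <= `|s - t|) ->
  mconnected d (fun z => exists t, 0 <= t <= D /\ z = g t).
Proof.
move=> D0 Hlip U V oU oV cov disj.
have covt t : 0 <= t <= D -> U (g t) \/ V (g t).
  by move=> ht; apply: cov; exists t.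
have disjt t : 0 <= t <= D -> ~ (U (g t) /\ V (g t)).
  by move=> ht [hu hv]; apply: (disj (g t)); split => //; exists t.
have h0 : (0 : R) <= 0 <= D by rewrite lexx D0.
case: (covt 0 h0) => start.
- right => z [[t [ht ->]] hv]; apply: (disjt t ht); split => //.
  exact: (path_stays_in D0 Hlip oU oV covt disjt start).
- left => z [[t [ht ->]] hu]; apply: (disjt t ht); split => //.
  apply: (path_stays_in D0 Hlip oV oU _ _ start) => // u hu'.
    by case: (covt u hu'); [right|left].
  by move=> [h1 h2]; apply: (disjt u hu').
Qed.

(* In a geodesic space, y lies in the component of x in any S containing
   the closed ball of radius d x y about x: a geodesic from x to y stays in
   this ball. *)
Lemma cc_of_ball S x y : (forall w, d x w <= d x y -> S w) -> cc S x y.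
Proof.
move=> HS; have [g [g0 [gD gi]]] := Hg x y; have D0 := d_ge0 x y.
exists (fun z => exists t, 0 <= t <= d x y /\ z = g t); split.
  by apply: path_connected => // s t hs ht; rewrite gi.
split.
  move=> z [t [/andP [t0 tD] ->]]; apply: HS; rewrite -{1}g0 gi ?lexx ?D0 ?t0 //.
  by rewrite sub0r normrN ger0_norm.
by split; [exists 0; rewrite lexx D0 | exists (d x y); rewrite lexx D0].
Qed.

Lemma cc_open S x : mopen d S -> mopen d (cc S x).
Proof.
move=> oS y hy; have [r [r0 hr]] := oS y (cc_sub hy).
exists r; split => // z hz; apply: cc_trans hy _; apply: cc_of_ball => w hw.
by apply: hr; lra.
Qed.

Definition chain_reach (S : set X) (del : R) (x w : X) : Prop :=
  exists n (z : nat -> X), z 0%N = x /\ z n = w /\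
    (forall i, (i <= n)%N -> S (z i)) /\ (forall i, (i < n)%N -> d (z i) (z i.+1) < del).

Lemma chain_reach_refl S del x : S x -> chain_reach S del x x.
Proof. by move=> Sx; exists 0%N, (fun _ => x); do 3 split => //; case. Qed.

Lemma chain_reach_step S del x w w' : chain_reach S del x w -> S w' ->
  d w w' < del -> chain_reach S del x w'.
Proof.
move=> [n [z [z0 [zn [zS zd]]]]] Sw' dww'.
exists n.+1, (fun i => if (i <= n)%N then z i else w'); split => //.
split; first by rewrite ltnn.
split; first by move=> i hi; case: ifP => hin //; apply: zS.
move=> i; rewrite ltnS => hi; rewrite hi.
case: (ltnP i n) => hin; first exact: zd.
have -> : i = n by apply/eqP; rewrite eqn_leq hi hin.
by rewrite zn.
Qed.

Lemma chain_reach_local S del x z : mopen d S -> 0 < del -> S z ->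
  exists r, 0 < r /\ forall y, d z y < r ->
    S y /\ (chain_reach S del x y <-> chain_reach S del x z).
Proof.
move=> oS del0 Sz; have [r [r0 hr]] := oS z Sz.
have [e [e0 [er ed]]] := pos_below2 r0 del0.
exists e; split => // y hy; have Sy : S y by apply: hr; lra.
split => //; split => reach; apply: chain_reach_step reach _ _ => //; last lra.
by rewrite d_sym; lra.
Qed.

(* Two points of one component of an open set are joined by chains of
   arbitrarily small steps inside the set: reachable and unreachable points
   form two disjoint open sets covering the component. *)
Lemma cc_chain S x y del : mopen d S -> cc S x y -> 0 < del ->
  chain_reach S del x y.
Proof.
move=> oS [A [cA [sA [Ax Ay]]]] del0.
have part_open b : mopen d (fun z => S z /\ (chain_reach S del x z <-> b)).
  move=> z [Sz hz]; have [r [r0 hr]] := chain_reach_local x oS del0 Sz.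
  exists r; split => // y' /hr [Sy' hy']; split => //; rewrite hy'; exact: hz.
have cov z : A z -> (S z /\ (chain_reach S del x z <-> True)) \/
                    (S z /\ (chain_reach S del x z <-> False)).
  by move=> /sA Sz; case: (pselect (chain_reach S del x z)) => h; [left|right];
    split => //; split.
have disj z : ~ (A z /\ (S z /\ (chain_reach S del x z <-> True)) /\
                       (S z /\ (chain_reach S del x z <-> False))).
  by move=> [_ [[_ h1] [_ h2]]]; apply/h2/h1.
case: (cA _ _ (part_open True) (part_open False) cov disj) => hAx.
  exfalso; apply: (hAx x); split => //; split; first exact: sA.
  by split => // _; apply: chain_reach_refl; exact: sA.
by apply: contra_notP (hAx y) => h; do 2 split => //; exact: sA.
Qed.

Section Exhaustion.
Variable K : nat -> set X.
Hypothesis HK : exhaustion d K.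
(* An auxiliary base point; the map h constructed below does not depend on it. *)
Variable x0 : X.

Lemma K_compact i : mcompact d (K i). Proof. by case: HK. Qed.

Lemma K_succ i x : K i x -> K i.+1 x.
Proof. by case: HK => _ [h _] /h; apply: minterior_sub. Qed.

Lemma K_mono i j x : (i <= j)%N -> K i x -> K j x.
Proof.
move=> /subnK <-; elim: (j - i)%N => [|k IH] //= hx.
by rewrite addSn; apply: K_succ; apply: IH.
Qed.

Lemma compl_K_succ i z : (~` K i.+1) z -> (~` K i) z.
Proof. by move=> h /K_succ. Qed.

Lemma compl_K_open i : mopen d (~` K i).
Proof. exact: compact_compl_open (@K_compact i). Qed.

(* Every compact set lies in some K i: the interiors of the K i cover it. *)
Lemma compact_in_K A : mcompact d A -> exists i, forall x, A x -> K i x.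
Proof.
move=> HA; have [] := HA nat (fun n => minterior d (K n.+1)).
- by move=> n; apply: minterior_open.
- move=> x _; case: HK => _ [h1 hcov]; have [i hi] := hcov x.
  by exists i; exact: h1 hi.
move=> s Hs; have [N HN] : exists N, forall n, List.In n s ->
    forall m, (N <= m)%N -> (n <= m)%N by apply: seq_eventually => n _; exists n.
exists N.+1 => x /Hs [n [hn hx]]; apply: (@K_mono n.+1); last exact: minterior_sub hx.
by rewrite ltnS; exact: HN hn N (leqnn N).
Qed.

Lemma ball_in_K c rho : exists i, forall y, d c y <= rho -> K i y.
Proof. exact: compact_in_K (@Hp c rho). Qed.

Lemma K_bound i : exists rho : R, 0 <= rho /\ forall y, K i y -> d x0 y <= rho.
Proof.
have [rho Hr] := compact_bounded x0 (@K_compact i).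
case: (lerP 0 rho) => h; first by exists rho.
by exists 0; split => // y /Hr; lra.
Qed.

Definition radK i : R := projT1 (cid (K_bound i)).
Lemma radK_ge0 i : 0 <= radK i. Proof. by rewrite /radK; case: cid => r []. Qed.
Lemma radK_out i y : radK i < d x0 y -> ~ K i y.
Proof. by rewrite /radK; case: cid => r [_ h] /= hr /h; lra. Qed.

(* Two points far enough from x0 relative to their distance lie in one
   component of X \ K i (a geodesic between them avoids K i). *)
Lemma cc_far i a b : radK i < d x0 a - d a b -> cc (~` K i) a b.
Proof.
move=> h; apply: cc_of_ball => w hw; apply: radK_out.
by have := d_tri x0 w a; rewrite (d_sym w a); lra.
Qed.

Lemma ball_glacial_scale c rho :
  glacial_scale d (fun m => fun z => d c z <= rho + 2 * m%:R) (fun m => m).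
Proof.
split.
  move=> m; exists (2 * (rho + 2 * m%:R)) => y z hy hz.
  by have := d_tri y c z; rewrite (d_sym y c); lra.
move=> B r [rB HB] r0; have [n1 hn1] := exists_nat_gt r.
case: (pselect (exists b, B b)) => [[b Bb]|nB]; last first.
  by exists n1; split => // y By; exfalso; apply: nB; exists y.
have [n2 hn2] := exists_nat_gt (d c b + rB - rho).
exists (n1 + n2)%N; rewrite natrD; have := ler0n R n1; have := ler0n R n2.
move=> p2 p1; split; last lra.
by move=> y By; have := d_tri c b y; have := HB b y Bb By; lra.
Qed.

(* A function that takes equal values at the two ends of any step of length
   at most m lying outside the ball of radius rho + 2m is glacially
   oscillating: it is constant along every chain of the scale above. *)
Lemma GO_of_far_steps c rho (f : X -> R) :
  (forall (m : nat) a b, rho + 2 * m%:R < d c a -> rho + 2 * m%:R < d c b ->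
     d a b <= m%:R -> f a = f b) -> glacially_oscillating d f.
Proof.
move=> Hf eps eps0; exists (fun m => fun z => d c z <= rho + 2 * m%:R), (fun m => m).
split; first exact: ball_glacial_scale.
move=> x n Hc.
suff -> : f (x n) = f (x 0%N) by rewrite subrr normr0.
elim: n Hc => [|n IH] Hc //; rewrite -IH => [|j hj]; last exact: Hc j (ltnW hj).
have [m [h1 [h2 h3]]] := Hc n (ltnSn n); symmetry; apply: (Hf m) => //.
  by rewrite ltNge; apply/negP.
by rewrite ltNge; apply/negP.
Qed.

Definition bumpf (x : X) (r : R) (z : X) : R := clamp (r - d x z).

Lemma bump_GO_proof x r : mcontinuous d (bumpf x r) /\
  (forall z, 0 <= bumpf x r z <= 1) /\ glacially_oscillating d (bumpf x r).
Proof.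
split.
  apply: lip_cont => y z; apply: le_trans (clamp_lip _ _) _.
  have -> : r - d x y - (r - d x z) = - (d x y - d x z) by lra.
  by rewrite normrN d_lip.
split; first by move=> z; apply: clamp_range.
apply: (GO_of_far_steps (c := x) (rho := r)) => m a b ha hb _.
have m0 := ler0n R m; by rewrite /bumpf !clamp0 //; lra.
Qed.

Definition bumpGO x r : GO d := exist _ (bumpf x r) (bump_GO_proof x r).

Definition damp i z : R := clamp (d x0 z - radK i - 1).

Lemma damp_lip i y z : `|damp i y - damp i z| <= d y z.
Proof.
apply: le_trans (clamp_lip _ _) _.
have -> : d x0 y - radK i - 1 - (d x0 z - radK i - 1) = d x0 y - d x0 z by lra.
exact: d_lip.
Qed.

Lemma damp0 i z : d x0 z <= radK i + 1 -> damp i z = 0.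
Proof. by move=> h; rewrite /damp clamp0 //; lra. Qed.

Lemma damp1 i z : radK i + 2 <= d x0 z -> damp i z = 1.
Proof. by move=> h; rewrite /damp clamp1 //; lra. Qed.

(* The indicator of the component of u in X \ K i, times the damping factor
   so that it becomes continuous. *)
Definition cc_ind i u z : R := if pselect (cc (~` K i) u z) then 1 else 0.
Definition ccf i u z : R := cc_ind i u z * damp i z.

Lemma cc_ind_eq i u a b : cc (~` K i) a b -> cc_ind i u a = cc_ind i u b.
Proof.
move=> hab; rewrite /cc_ind; case: pselect => h1; case: pselect => h2 //; exfalso.
- by apply: h2; apply: cc_trans h1 hab.
- by apply: h1; apply: cc_trans h2 (cc_sym hab).
Qed.

Lemma cc_ind_le i u y (a : R) : `|cc_ind i u y * a| <= `|a|.
Proof. by rewrite /cc_ind; case: pselect => h; rewrite ?mul1r ?mul0r ?normr0. Qed.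

Lemma ccf_range i u z : 0 <= ccf i u z <= 1.
Proof.
rewrite /ccf /cc_ind; case: pselect => h; rewrite ?mul1r ?mul0r ?lexx ?ler01 //.
exact: clamp_range.
Qed.

(* ccf is continuous: near K i it is dominated by the damping factor, far
   from K i the indicator is locally constant (cc_far). *)
Lemma ccf_cont i u : mcontinuous d (ccf i u).
Proof.
move=> x eps eps0; rewrite /ccf.
case: (lerP (d x0 x) (radK i + 1)) => hx.
- exists eps; split => // y hy; rewrite (damp0 hx) mulr0 sub0r normrN.
  apply: le_lt_trans (cc_ind_le i u y _) _.
  by have := damp_lip i y x; rewrite (damp0 hx) subr0 d_sym; lra.
- have hpos : 0 < d x0 x - radK i - 1 by lra.
  have [del [del0 [h1 h2]]] := pos_below2 eps0 hpos.
  exists del; split => // y hy.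
  rewrite -(cc_ind_eq u (cc_far (a := x) (b := y) _)); last lra.
  rewrite -mulrBr; apply: le_lt_trans (cc_ind_le i u x _) _.
  by have := damp_lip i x y; lra.
Qed.

Lemma ccf_GO i u : glacially_oscillating d (ccf i u).
Proof.
apply: (GO_of_far_steps (c := x0) (rho := radK i + 2)) => m a b ha hb hab.
have m0 := ler0n R m.
rewrite /ccf (cc_ind_eq u (cc_far (a := a) (b := b) _)); last lra.
by rewrite !damp1 //; lra.
Qed.

Definition ccGO i u : GO d :=
  exist _ (ccf i u) (conj (ccf_cont i u) (conj (ccf_range i u) (ccf_GO i u))).

Lemma ccf_pos i u z : 0 < ccf i u z -> cc (~` K i) u z.
Proof. by rewrite /ccf /cc_ind; case: pselect => // h; rewrite mul0r ltxx. Qed.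

Lemma ccf_one i u z : cc (~` K i) u z -> radK i + 2 <= d x0 z -> ccf i u z = 1.
Proof. by move=> hc hz; rewrite /ccf /cc_ind; case: pselect => // h; rewrite mul1r damp1. Qed.

Lemma ccf_zero i u z : ~ cc (~` K i) u z -> ccf i u z = 0.
Proof. by move=> hc; rewrite /ccf /cc_ind; case: pselect => // h; rewrite mul0r. Qed.

(* Points of one
   component are joined by a chain of steps < 1 outside K i; once K i
   contains the first set of the glacial scale, this is a chain of it. *)
Lemma GO_small_osc (f : GO d) eps : 0 < eps -> exists i0, forall i, (i0 <= i)%N ->
  forall a b, cc (~` K i) a b -> `|sval f a - sval f b| < eps.
Proof.
move=> eps0; have [_ [_ GOf]] := svalP f.
have [Ks [ns [[bKs covKs] Hch]]] := GOf eps eps0.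
have [m [_ hm]] := covKs set0 1 (ex_intro _ 0 (fun _ _ h => False_ind _ h)) ltr01.
have [i0 Hi0] : exists i0, forall z, Ks m z -> K i0 z.
  case: (pselect (exists k, Ks m k)) => [[k hk]|nk].
  - have [rk Hrk] := bKs m; have [i0 Hi0] := ball_in_K k rk.
    by exists i0 => z hz; apply: Hi0; apply: Hrk.
  - by exists 0%N => z hz; exfalso; apply: nk; exists z.
exists i0 => i hi a b hab.
have [n [z [<- [<- [zS zd]]]]] := cc_chain (@compl_K_open i) hab ltr01.
apply: Hch => j hj; exists m; split.
  by move=> /Hi0 /(K_mono hi); apply: zS; apply: ltnW.
split; first by move=> /Hi0 /(K_mono hi); apply: zS.
by have := zd j hj; lra.
Qed.

Lemma end_comp (e : Ends d K) i : component d (~` K i) (sval e i).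
Proof. by case: (svalP e i). Qed.

Lemma end_sub (e : Ends d K) i j y : (i <= j)%N -> sval e j y -> sval e i y.
Proof.
move=> /subnK <-; elim: (j - i)%N y => [|k IH] y //= hy.
by apply: IH; case: (svalP e (k + i)%N) => _; apply; rewrite -addSn.
Qed.

Lemma end_ne (e : Ends d K) i : exists y, sval e i y.
Proof. exact: component_ne (end_comp e i). Qed.

Lemma end_eq (e e' : Ends d K) : sval e = sval e' -> e = e'.
Proof. by case: e => U hU; case: e' => U' hU' /= h; apply: eq_exist. Qed.

Definition end_val_set (e : Ends d K) (f : GO d) :=
  [set r : R | exists i, forall y, sval e i y -> r <= sval f y].
Definition end_val (e : Ends d K) (f : GO d) : R := sup (end_val_set e f).

Lemma end_val_spec (f : GO d) eps : 0 < eps -> exists i0, forall (e : Ends d K) i,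
  (i0 <= i)%N -> forall y, sval e i y -> `|sval f y - end_val e f| <= eps.
Proof.
move=> eps0; have [i0 Hi0] := GO_small_osc f eps0; have [_ [rf _]] := svalP f.
exists i0 => e i hi y hy.
have hsup : has_sup (end_val_set e f).
  split; first by exists 0, 0%N => w _; case/andP: (rf w).
  exists 1 => r [j hj]; have [w hw] := end_ne e j.
  by apply: le_trans (hj w hw) _; case/andP: (rf w).
have near_y w : sval e i w -> `|sval f y - sval f w| < eps.
  by move=> hw; apply: (Hi0 i hi); rewrite -(component_at (end_comp e i) hy).
have low : sval f y - eps <= end_val e f.
  apply: ub_le_sup; first by case: hsup.
  by exists i => w /near_y; rewrite ltr_norml => /andP [h1 h2]; lra.
have up : end_val e f <= sval f y + eps.
  apply: ge_sup; first by case: hsup.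
  move=> r [j hj]; have [w hw] := end_ne e (maxn i j).
  have := hj w (end_sub (leq_maxr i j) hw).
  by have := near_y w (end_sub (leq_maxl i j) hw); rewrite ltr_norml => /andP [h1 h2]; lra.
by rewrite ler_norml; apply/andP; split; lra.
Qed.

Lemma end_val_eq (e : Ends d K) (f : GO d) v :
  (forall eps, 0 < eps -> exists i, forall y, sval e i y -> `|sval f y - v| <= eps) ->
  end_val e f = v.
Proof.
move=> H; apply: close_eq => eps eps0; have e2 : 0 < eps / 2 by lra.
have [i0 Hi0] := end_val_spec f e2; have [i1 Hi1] := H _ e2.
have [y hy] := end_ne e (maxn i0 i1).
have := Hi0 e _ (leq_maxl i0 i1) y hy; have := Hi1 y (end_sub (leq_maxr i0 i1) hy).
by rewrite !ler_norml => /andP [h1 h2] /andP [h3 h4]; apply/andP; split; lra.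
Qed.

Lemma end_val_closure (e : Ends d K) : in_cf_closure (end_val e).
Proof.
move=> s eps eps0; have e2 : 0 < eps / 2 by lra.
have [n Hn] : exists n, forall f, List.In f s -> forall m, (n <= m)%N ->
    forall y, sval e m y -> `|sval f y - end_val e f| < eps.
  apply: seq_eventually => f _; have [i0 Hi0] := end_val_spec f e2.
  by exists i0 => m hm y hy; apply: le_lt_trans (Hi0 e m hm y hy) _; lra.
by have [y hy] := end_ne e n; exists y => f hf; exact: Hn f hf n (leqnn n) y hy.
Qed.

Definition end_pt (e : Ends d K) : CF d := exist _ (end_val e) (end_val_closure e).

Definition hmap (p : FX d K) : CF d :=
  match p with inl x => cf_emb d x | inr e => end_pt e end.

Lemma bump_center x r : bumpf x r x = clamp r.
Proof. by rewrite /bumpf d_xx subr0. Qed.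

Lemma end_val_bump (e : Ends d K) x r : end_val e (bumpGO x r) = 0.
Proof.
apply: end_val_eq => eps eps0; have [i Hi] := ball_in_K x r; exists i => y hy.
have hr : r < d x y.
  by rewrite ltNge; apply/negP => /Hi; apply: component_sub (end_comp e i) hy.
by rewrite /= /bumpf clamp0 ?subrr ?normr0 ?ltW //; lra.
Qed.

Lemma end_val_ccf_in (e : Ends d K) i u :
  (forall y, sval e i y -> cc (~` K i) u y) -> end_val e (ccGO i u) = 1.
Proof.
move=> H; apply: end_val_eq => eps eps0; have [j Hj] := ball_in_K x0 (radK i + 2).
exists (maxn i j) => y hy; rewrite /= ccf_one ?subrr ?normr0 ?ltW //.
  by apply: H; apply: end_sub hy; apply: leq_maxl.
rewrite ltNge; apply/negP => h; apply: (component_sub (end_comp e _) hy).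
by apply: (K_mono (leq_maxr i j)); apply: Hj; lra.
Qed.

Lemma end_val_ccf_out (e : Ends d K) i u :
  (forall y, sval e i y -> ~ cc (~` K i) u y) -> end_val e (ccGO i u) = 0.
Proof.
move=> H; apply: end_val_eq => eps eps0; exists i => y hy.
by rewrite /= ccf_zero ?subrr ?normr0 ?ltW //; apply: H.
Qed.

Lemma end_val_ccf_pos (e : Ends d K) i u :
  0 < end_val e (ccGO i u) -> sval e i = cc (~` K i) u.
Proof.
move=> hL; have [y [hy hc]] : exists y, sval e i y /\ cc (~` K i) u y.
  apply: contrapT => hn; suff : end_val e (ccGO i u) = 0 by lra.
  by apply: end_val_ccf_out => y hy hc; apply: hn; exists y.
by rewrite (component_at (end_comp e i) hy); symmetry; exact: cc_eq hc.
Qed.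

Lemma cf_eq (a b : CF d) : (forall f, sval a f = sval b f) -> a = b.
Proof. by case: a => a ha; case: b => b hb /= h; apply: eq_exist; apply: funext. Qed.

(* Bumps separate points and points from ends; damped component indicators
   separate ends. *)
Lemma hmap_inj : injective hmap.
Proof.
move=> p q /(congr1 sval) H.
have sep (f : GO d) : sval (hmap p) f = sval (hmap q) f by rewrite H.
case: p q sep {H} => [x|e] [y|e'] /= sep.
- case: (pselect (x = y)) => [->//|hxy]; exfalso.
  have := sep (bumpGO x (d x y)); rewrite /= bump_center /bumpf subrr (@clamp0 _ 0) //.
  by move/eqP; rewrite gt_eqF // clamp_gt0 // d_pos.
- have := sep (bumpGO x 1); rewrite /= bump_center end_val_bump clamp1 //.
  by move/eqP; rewrite oner_eq0.
- have := sep (bumpGO y 1); rewrite /= bump_center end_val_bump clamp1 //.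
  by move/eqP; rewrite eq_sym oner_eq0.
- congr inr; apply: end_eq; apply: contrapT => hne.
  have [i hi] : exists i, sval e i <> sval e' i.
    by apply/existsNP => hall; apply: hne; apply: funext.
  have [u [hu eu]] := end_comp e i.
  have := sep (ccGO i u); rewrite end_val_ccf_in; last by rewrite eu.
  rewrite end_val_ccf_out => [/eqP|y hy hc]; first by rewrite oner_eq0.
  apply: hi; apply: component_eq (end_comp e i) (end_comp e' i) _ hy.
  by rewrite eu.
Qed.

(* Surjectivity, first case: if phi sees some bump about x0, phi is a point
   of X.  Otherwise every x of the compact ball is separated from phi by
   some f, and finitely many such f together with the bump leave no point
   of X near phi. *)
Lemma cf_point_of_bump (phi : CF d) rho : 0 < sval phi (bumpGO x0 rho) ->
  exists x, cf_emb d x = phi.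
Proof.
move=> hpos; apply: contrapT => hno; pose I := {x : X | d x0 x <= rho}.
have hF (i : I) : exists f : GO d, sval f (sval i) <> sval phi f.
  apply/existsNP => hall; apply: hno; exists (sval i); apply: cf_eq => f /=.
  exact: contrapT (hall f).
have [F HF] := choice hF.
pose del (i : I) := `|sval (F i) (sval i) - sval phi (F i)| / 2.
have del0 i : 0 < del i.
  have : 0 < `|sval (F i) (sval i) - sval phi (F i)|.
    by rewrite normr_gt0 subr_eq0; apply/eqP; exact: HF i.
  by rewrite /del; lra.
pose G (i : I) := fun z => del i < `|sval (F i) z - sval phi (F i)|.
have oG i : mopen d (G i).
  move=> z hz; have [cF _] := svalP (F i).
  have m0 : 0 < `|sval (F i) z - sval phi (F i)| - del i by rewrite /G in hz; lra.
  have [del' [d0 hd]] := cF z _ m0; exists del'; split => // w /hd.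
  have := ler_distD (sval (F i) w) (sval (F i) z) (sval phi (F i)).
  by rewrite /G distrC; lra.
have [s Hs] : exists s : seq I, forall x, d x0 x <= rho -> exists i, List.In i s /\ G i x.
  apply: (@Hp x0 rho I G oG) => z hz; exists (exist _ z hz).
  by have := del0 (exist _ z hz); rewrite /G /del /=; lra.
have [eps1 [e10 He1]] := seq_pos_lb s del0.
have [eps [eps0 [h1 h2]]] := pos_below2 e10 hpos.
have [z Hz] := svalP phi (bumpGO x0 rho :: map F s) eps eps0.
have hz : 0 < rho - d x0 z.
  apply: clamp_pos; move: (Hz _ (or_introl erefl)); rewrite /= /bumpf ltr_distlC.
  by move=> /andP [hb1 hb2]; lra.
have [i [hi hGi]] := Hs z ltac:(lra).
have := Hz (F i) (or_intror (In_map_seq F hi)).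
by have := He1 i hi; rewrite /G in hGi; lra.
Qed.

Section PointAtInfinity.
(* Surjectivity, second case: phi sees no bump about x0. *)
Variable phi : CF d.
Hypothesis no_bump : forall rho, ~ 0 < sval phi (bumpGO x0 rho).

Lemma far_of_bump i z :
  `|sval (bumpGO x0 (radK i + 3)) z - sval phi (bumpGO x0 (radK i + 3))| < 1/2 ->
  radK i + 2 < d x0 z.
Proof.
have := @no_bump (radK i + 3); move/negP; rewrite -leNgt /= /bumpf => hp hz.
rewrite ltNge; apply/negP => h; move: hz; rewrite clamp1; last lra.
by rewrite ltr_distlC => /andP [h1 h2]; lra.
Qed.

(* For each i, phi gives weight > 1/2 to the indicator of some component of
   X \ K i: approximate phi at a far point z; the point at distance
   radK i + 3/2 from x0 on a geodesic towards z is close to one of finitely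
   many centres c covering the ball, and z, a and c lie in one component. *)
Lemma select_component i : exists u, (~` K i) u /\ 1/2 < sval phi (ccGO i u).
Proof.
have [s Hs] : exists s : seq X, forall x, d x0 x <= radK i + 2 ->
    exists c, List.In c s /\ d c x < 1/4.
  apply: (@Hp x0 (radK i + 2) X (fun c w => d c w < 1/4) (fun c => @mopen_ball c (1/4))).
  by move=> z _; exists z; rewrite d_xx; lra.
have [z Hz] := svalP phi (bumpGO x0 (radK i + 3) :: map (ccGO i) s) (1/2) ltac:(lra).
have hfar := far_of_bump (Hz _ (or_introl erefl)).
have [g [g0 [gD gi]]] := Hg x0 z; have R0 := radK_ge0 i.
have ht : 0 <= radK i + 3/2 <= d x0 z by apply/andP; split; lra.
have hD : 0 <= d x0 z <= d x0 z by apply/andP; split; lra.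
have h0 : (0:R) <= 0 <= d x0 z by rewrite lexx d_ge0.
set a := g (radK i + 3/2).
have da : d x0 a = radK i + 3/2.
  by rewrite /a -{1}g0 gi // sub0r normrN ger0_norm //; lra.
have daz : d a z = d x0 z - (radK i + 3/2).
  rewrite /a -{1}gD gi // distrC ger0_norm //; lra.
have cza : cc (~` K i) z a by apply: cc_far; rewrite (d_sym z a) daz; lra.
have [c [hc hca]] := Hs a ltac:(lra).
have cac : cc (~` K i) a c by apply: cc_far; rewrite (d_sym a c) da; lra.
have czc := cc_sym (cc_trans cza cac).
exists c; split; first exact: cc_mem czc.
have := Hz (ccGO i c) (or_intror (In_map_seq _ hc)).
by rewrite /= ccf_one //; [rewrite ltr_distlC => /andP [h1 h2]; lra | lra].
Qed.

(* The selected component is unique: two indicators of weight > 1/2 are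
   simultaneously positive at a point approximating phi. *)
Lemma selected_unique i u u' : 1/2 < sval phi (ccGO i u) ->
  1/2 < sval phi (ccGO i u') -> cc (~` K i) u = cc (~` K i) u'.
Proof.
move=> h1 h2; have [z Hz] := svalP phi [:: ccGO i u; ccGO i u'] (1/2) ltac:(lra).
have c1 : cc (~` K i) u z.
  apply: ccf_pos; move: (Hz _ (or_introl erefl)); rewrite /= ltr_distlC.
  by move=> /andP [a1 a2]; lra.
have c2 : cc (~` K i) u' z.
  apply: ccf_pos; move: (Hz _ (or_intror (or_introl erefl))); rewrite /= ltr_distlC.
  by move=> /andP [a1 a2]; lra.
by rewrite (cc_eq c1) (cc_eq c2).
Qed.

Definition sel_pt : nat -> X := projT1 (choice select_component).

Lemma sel_pt_spec i : (~` K i) (sel_pt i) /\ 1/2 < sval phi (ccGO i (sel_pt i)).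
Proof. exact: (projT2 (choice select_component) i). Qed.

(* The selected components are nested, hence form an end: the component
   selected at level i+1 lies in one selected at level i. *)
Lemma selected_end : is_end d K (fun i => cc (~` K i) (sel_pt i)).
Proof.
move=> i; split; first by apply: cc_component; case: (sel_pt_spec i).
set u := sel_pt i.+1.
have hu : 1/2 < sval phi (ccGO i u).
  have [z Hz] := svalP phi [:: ccGO i.+1 u; ccGO i u; bumpGO x0 (radK i + 3)]
    (1/4) ltac:(lra).
  have hfar : radK i + 2 < d x0 z.
    apply: far_of_bump.
    by apply: lt_trans (Hz _ (or_intror (or_intror (or_introl erefl)))) _; lra.
  have c1 : cc (~` K i.+1) u z.
    apply: ccf_pos; have := (sel_pt_spec i.+1).2; rewrite -/u => hp.
    by move: (Hz _ (or_introl erefl)); rewrite /= ltr_distlC => /andP [a1 a2]; lra.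
  move: (Hz _ (or_intror (or_introl erefl))); rewrite /= ccf_one; last lra.
    by rewrite ltr_distlC => /andP [a1 a2]; lra.
  exact: cc_mono (@compl_K_succ i) c1.
move=> x hx; rewrite (selected_unique (sel_pt_spec i).2 hu).
exact: cc_mono (@compl_K_succ i) hx.
Qed.

Definition sel_end : Ends d K := exist _ _ selected_end.

(* phi is the point of the selected end: on the selected component of a
   large level every f is close to its value under phi. *)
Lemma sel_end_pt : end_pt sel_end = phi.
Proof.
apply: cf_eq => f /=; apply: end_val_eq => eps eps0; have e2 : 0 < eps / 2 by lra.
have [i0 Hi0] := GO_small_osc f e2.
have [del [del0 [dl1 dl2]]] := pos_below2 e2 (ltac:(lra) : 0 < 1/2 :> R).
have [z Hz] := svalP phi [:: f; ccGO i0 (sel_pt i0)] del del0.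
have cz : cc (~` K i0) (sel_pt i0) z.
  apply: ccf_pos; have := (sel_pt_spec i0).2 => hp.
  by move: (Hz _ (or_intror (or_introl erefl))); rewrite /= ltr_distlC => /andP [a1 a2]; lra.
exists i0 => y hy; have := Hi0 i0 (leqnn _) y z (cc_trans (cc_sym hy) cz).
move: (Hz _ (or_introl erefl)); rewrite !ltr_norml ler_norml => /andP [a1 a2] /andP [a3 a4].
by apply/andP; split; lra.
Qed.

End PointAtInfinity.

Lemma hmap_surj (phi : CF d) : exists p, hmap p = phi.
Proof.
case: (pselect (exists rho, 0 < sval phi (bumpGO x0 rho))) => [[rho hr]|hn].
- by have [x hx] := cf_point_of_bump hr; exists (inl x).
- by exists (inr (sel_end (fun rho hr => hn (ex_intro _ rho hr)))); exact: sel_end_pt.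
Qed.

(* Continuity of h at p, in terms of the product topology of CF: a basic
   neighbourhood of p is mapped eps-close to h p on finitely many f.  At a
   point use a small ball; at an end use a far component of the end, on
   which all f are uniformly close to their end values. *)
Lemma hmap_cont_at p (s : seq (GO d)) eps : 0 < eps ->
  exists B : set (FX d K), fbasis B /\ B p /\ forall q, B q ->
    forall f, List.In f s -> `|sval (hmap q) f - sval (hmap p) f| < eps.
Proof.
move=> eps0; case: p => [x|e].
- have hdel (f : GO d) : exists del, 0 < del /\
      forall y, d x y < del -> `|sval f y - sval f x| < eps.
    have [cf _] := svalP f; have [del [del0 hdel]] := cf x eps eps0.
    by exists del; split => // y /hdel; rewrite distrC.
  have [delf Hdelf] := choice hdel.
  have [del [del0 Hdel]] := seq_pos_lb s (fun f => (Hdelf f).1).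
  exists (fun q : FX d K => if q is inl y then is_true (d x y < del) else False); split.
    left; exists (fun y => d x y < del); split; first exact: mopen_ball.
    by split; [exact: ball_compact_closure | apply: funext => -[]].
  split; first by rewrite /= d_xx.
  by move=> [y|e] //= hy f hf; apply: (Hdelf f).2; exact: lt_le_trans hy (Hdel f hf).
- have e3 : 0 < eps / 3 by lra.
  have [n Hn] : exists n, forall f, List.In f s -> forall m, (n <= m)%N ->
      forall (e' : Ends d K) y, sval e' m y -> `|sval f y - end_val e' f| <= eps / 3.
    apply: seq_eventually => f _; have [i0 Hi0] := end_val_spec f e3.
    by exists i0 => m hm e' y hy; exact: Hi0 e' m hm y hy.
  exists (fun q => match q with inl y => sval e n y | inr e' => sval e' n = sval e n end).
  split; first by right; exists n, (sval e n); split => //; exact: end_comp.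
  split => // -[y|e'] /= hq f hf.
    by apply: le_lt_trans (Hn f hf n (leqnn _) e y hq) _; lra.
  have [y hy] := end_ne e' n; have h1 := Hn f hf n (leqnn _) e' y hy.
  rewrite hq in hy; have h2 := Hn f hf n (leqnn _) e y hy.
  move: h1 h2; rewrite !ler_norml ltr_norml => /andP [a1 a2] /andP [a3 a4].
  by apply/andP; split; lra.
Qed.

(* Openness of h at p: every q whose image is close enough to h p on
   finitely many test functions lies in a given basic neighbourhood B of p.
   At a point x use a bump inside the open set underlying B; at an end use
   the damped indicator of the component defining B. *)
Lemma hmap_open_at p (B : set (FX d K)) : fbasis B -> B p ->
  exists s eps, 0 < eps /\ forall q,
    (forall f, List.In f s -> `|sval (hmap q) f - sval (hmap p) f| < eps) -> B q.
Proof.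
case: p => [x|e] fB Bp.
- have [O [oO [Ox OB]]] : exists O, mopen d O /\ O x /\ forall y, O y -> B (inl y).
    case: fB => [[V [oV [_ hB]]]|[i [U [cU hB]]]]; rewrite hB in Bp *; first by exists V.
    exists U; split => //; have [u [_ ->]] := cU; exact: cc_open (@compl_K_open i).
  have [r [r0 hr]] := oO x Ox.
  exists [:: bumpGO x r], (clamp r); split; first exact: clamp_gt0.
  move=> q /(_ _ (or_introl erefl)); case: q => [y|e] /=; rewrite bump_center.
    rewrite /bumpf ltr_distlC => /andP [h1 h2]; apply: OB; apply: hr.
    have : 0 < r - d x y by apply: clamp_pos; lra.
    lra.
  by rewrite end_val_bump sub0r normrN ger0_norm ?ltxx // ltW // clamp_gt0.
- case: fB Bp => [[V [_ [_ ->]]] //|[i [U [[u [hu ->]] ->]]]] /= eU.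
  have L1 : end_val e (ccGO i u) = 1 by apply: end_val_ccf_in => y; rewrite eU.
  exists [:: ccGO i u], (1/2); split; first lra.
  move=> q /(_ _ (or_introl erefl)) /=; rewrite L1 ltr_distlC => /andP [h1 h2].
  case: q h1 h2 => [y|e'] /= h1 h2; first by apply: ccf_pos; lra.
  by apply: end_val_ccf_pos; lra.
Qed.

Lemma hmap_cont W : @cfopen R X d W -> @fopen R X d K (fun p => W (hmap p)).
Proof.
move=> HW p Wp; have [s [eps [eps0 Hs]]] := HW _ Wp.
have [B [fB [Bp HB]]] := hmap_cont_at p s eps0.
by exists B; split => //; split => // q /HB Hq; exact: Hs.
Qed.

Lemma hmap_open W : @fopen R X d K W -> @cfopen R X d (fun b => exists a, W a /\ hmap a = b).
Proof.
move=> HW _ [p [Wp <-]]; have [B [fB [Bp BW]]] := HW p Wp.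
have [s [eps [eps0 Hs]]] := hmap_open_at fB Bp.
exists s, eps; split => // psi Hpsi; have [q hq] := hmap_surj psi.
by exists q; split => //; apply: BW; apply: Hs; rewrite hq.
Qed.

Lemma hmap_bij : bijective hmap.
Proof.
exists (fun psi => projT1 (cid (hmap_surj psi))).
- by move=> p; apply: hmap_inj; case: (cid (hmap_surj (hmap p))).
- by move=> psi; case: (cid (hmap_surj psi)).
Qed.

Lemma hmap_homeomorphism : homeomorphism (@fopen R X d K) (@cfopen R X d) hmap.
Proof. by split; [exact: hmap_bij | split; [exact: hmap_cont | exact: hmap_open]]. Qed.

End Exhaustion.
End ProperGeodesic.

(* Without points, FX and CF(X) are empty and the statement is trivial. *)
Lemma homeomorphism_empty (R : realType) (X : Type) (d : X -> X -> R)
    (K : nat -> set X) : (X -> False) ->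
  exists h : FX d K -> CF d, homeomorphism (@fopen R X d K) (@cfopen R X d) h.
Proof.
move=> noX.
have noFX : FX d K -> False.
  case=> [x|e]; first exact: noX.
  by have [y _] := component_ne (end_comp e 0%N); exact: noX y.
have noCF : CF d -> False by move=> psi; have [y _] := svalP psi [::] 1 ltr01; exact: noX y.
exists (fun p => False_rect _ (noFX p)); split.
  by exists (fun psi => False_rect _ (noCF psi)) => a; [case: (noFX a)|case: (noCF a)].
by split => W _ a; [case: (noFX a)|case: (noCF a)].
Qed.

Theorem corollary4p7 (R : realType) (X : Type) (d : X -> X -> R)
  (Hmetric : is_metric d) (Hproper : proper_metric d) (Hgeod : geodesic d)
  (K : nat -> set X) (HK : exhaustion d K) :
  exists h : FX d K -> CF d,
    homeomorphism (@fopen R X d K) (@cfopen R X d) h /\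
    (forall x : X, h (inl x) = cf_emb d x).
Proof.
case: (pselect (exists x : X, True)) => [[x0 _]|hX].
  exists (hmap Hmetric Hproper HK); split => //.
  exact: (hmap_homeomorphism Hmetric Hproper Hgeod HK x0).
have [h Hh] := homeomorphism_empty d K (fun x => hX (ex_intro _ x I)).
by exists h; split => // x; case: hX; exists x.
Qed.
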